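(* In every deterministic MDP (as in the context), the algorithm R-max returns an optimal policy. Consequently its sample complexity is at most $SAT$.
   Context: Deterministic finite-horizon MDP $\mathcal M=(\mathcal S,\mathcal A,T,s_1,f,R)$: finite state set with $S=|\mathcal S|$, actions with $A=|\mathcal A|$, start state $s_1$, transitions $s_{t+1}=f(s_t,a_t)$, rewards $R(s_t,a_t)$, steps $t\in[T]$, no discounting; a policy is optimal if it maximizes $J(\pi)=\mathbb E_\pi[\sum_{t=1}^TR(s_t,a_t)]$; each episode counts $T$ timesteps, and sample complexity is the least number of timesteps after which the output policy is optimal with probability at least $1/2$. Let $R_{\max}=\max_{(s,a)}R(s,a)$. R-max knows $\mathcal S,\mathcal A,T$ and $R_{\max}$ and has a deterministic oracle that maps any model $(\hat f,\hat R)$ (with $\hat f:\mathcal S\times\mathcal A\to\mathcal S$, $\hat R:\mathcal S\times\mathcal A\to\mathbb R$) to a deterministic time-dependent policy that is optimal for the MDP $(\mathcal S,\mathcal A,T,s_1,\hat f,\hat R)$. R-max: initialize $\hat f(s,a)=s$ and $\hat R(s,a)=R_{\max}$ for all $(s,a)$; run $SA$ episodes; at each step $t$ of each episode, in the current state $s$, take the action prescribed at $(t,s)$ by the oracle's policy for the current model $(\hat f,\hat R)$, observe the reward $r$ and next state $s'$, and set $\hat R(s,a)\gets r$, $\hat f(s,a)\gets s'$; finally return the oracle's policy for the final $(\hat f,\hat R)$. *)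

From mathcomp Require Import all_boot all_order all_algebra.
Set Implicit Arguments. Unset Strict Implicit. Unset Printing Implicit Defensive.
Import Order.TTheory GRing.Theory Num.Theory.
Local Open Scope ring_scope.

(* Time steps are indexed
   0, ..., T-1 (the paper's 1..T shifted by one). *)

Section MDP.
Variables (R : realDomainType) (S A : finType).

Definition policy := nat -> S -> A.

Fixpoint state_at (f : S -> A -> S) (pi : policy) (s1 : S) (t : nat) : S :=
  match t with
  | 0 => s1
  | t'.+1 => let s := state_at f pi s1 t' in f s (pi t' s)
  end.

Definition J (f : S -> A -> S) (r : S -> A -> R) (s1 : S) (T : nat)
  (pi : policy) : R :=
  \sum_(t < T) r (state_at f pi s1 t) (pi t (state_at f pi s1 t)).

Definition optimal (f : S -> A -> S) (r : S -> A -> R) (s1 : S) (T : nat)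
  (pi : policy) : Prop :=
  forall pi' : policy, J f r s1 T pi' <= J f r s1 T pi.

Definition model : Type := ((S -> A -> S) * (S -> A -> R))%type.

Definition oracle_type := (S -> A -> S) -> (S -> A -> R) -> policy.

Definition update (m : model) (s : S) (a : A) (s' : S) (rw : R) : model :=
  (fun x b => if (x == s) && (b == a) then s' else m.1 x b,
   fun x b => if (x == s) && (b == a) then rw else m.2 x b).

Variables (f : S -> A -> S) (r : S -> A -> R) (s1 : S) (T : nat)
  (Rmax : R) (oracle : oracle_type).

Fixpoint run_episode (n t : nat) (s : S) (m : model) : model * seq (S * A) :=
  match n with
  | 0 => (m, [::])
  | n'.+1 =>
      let a := oracle m.1 m.2 t s in
      let s' := f s a in
      let m' := update m s a s' (r s a) in
      let res := run_episode n' t.+1 s' m' in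
      (res.1, (s, a) :: res.2)
  end.

Fixpoint run_episodes (k : nat) (m : model) : model * seq (S * A) :=
  match k with
  | 0 => (m, [::])
  | k'.+1 =>
      let e := run_episode T 0 s1 m in
      let rest := run_episodes k' e.1 in
      (rest.1, e.2 ++ rest.2)
  end.

Definition init_model : model := (fun s _ => s, fun _ _ => Rmax).

Definition rmax_run : model * seq (S * A) :=
  run_episodes (#|S| * #|A|) init_model.

Definition rmax_policy : policy :=
  oracle rmax_run.1.1 rmax_run.1.2.

(* all environment timesteps consumed by R-max *)
Definition rmax_samples : seq (S * A) := rmax_run.2.

End MDP.

From mathcomp Require Import all_boot all_order all_algebra.
From Stdlib Require Import FunctionalExtensionality.
Set Implicit Arguments. Unset Strict Implicit. Unset Printing Implicit Defensive.
Import Order.TTheory GRing.Theory Num.Theory.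
Local Open Scope ring_scope.

(* Call a model exact at (s, a) when it predicts the true successor and reward
   there, and optimistic when every pair is exact or still carries the initial
   guess "self-loop paying Rmax".  The number [known m] of exact pairs is the
   progress measure.  Each step of R-max records a true observation, so an
   episode either changes nothing or strictly increases [known].  Hence after
   #|S| * #|A| episodes either every pair is known (the model is the true MDP
   and the oracle policy is optimal), or some episode left the model unchanged.
   In the latter case the model is exact along the trajectory of its own
   optimal policy pi, so pi earns in the true MDP what the model predicts
   (simulation lemma); and since an optimistic model overestimates the value
   of every policy (optimism lemma), pi is optimal in the true MDP.
   The sample count is immediate: every episode takes exactly T steps. *)

Section RMax.
Variables (R : realDomainType) (S A : finType).
Variables (f : S -> A -> S) (r : S -> A -> R) (Rmax : R).

Definition exact_at (m : model R S A) (s : S) (a : A) : bool :=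
  (m.1 s a == f s a) && (m.2 s a == r s a).

Definition optimistic (m : model R S A) : Prop :=
  forall s a, exact_at m s a \/ (m.1 s a = s /\ m.2 s a = Rmax).

Definition known (m : model R S A) : nat :=
  #|[pred p : S * A | exact_at m p.1 p.2]|.

Definition learn (m : model R S A) (s : S) (a : A) : model R S A :=
  update m s a (f s a) (r s a).

Lemma exact_at_learn m s a x b :
  exact_at (learn m s a) x b = exact_at m x b || ((x == s) && (b == a)).
Proof.
rewrite /exact_at /learn /update /=.
by case: (x =P s) => [->|_]; case: (b =P a) => [->|_]; rewrite /= ?eqxx ?orbT ?orbF.
Qed.

Lemma known_learn_lt m s a : ~~ exact_at m s a -> (known m < known (learn m s a))%N.
Proof.
move=> unknown; apply: proper_card; apply/properP; split.
  by apply/subsetP => -[x b]; rewrite !inE exact_at_learn => ->.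
by exists (s, a); rewrite !inE /= ?exact_at_learn ?eqxx ?orbT.
Qed.

Lemma learn_exact m s a : exact_at m s a -> learn m s a = m.
Proof.
case: m => m1 m2 /andP[/eqP e1 /eqP e2]; rewrite /learn /update /=.
by congr pair; do 2 apply: functional_extensionality => ?;
  case: eqP => [->|] //=; case: eqP => [->|].
Qed.

Lemma optimistic_learn m s a : optimistic m -> optimistic (learn m s a).
Proof.
move=> opt x b; rewrite exact_at_learn.
case: (opt x b) => [-> | guess]; first by left.
have [_ | miss] := boolP ((x == s) && (b == a)); first by left; rewrite orbT.
by right; rewrite /learn /update /= (negbTE miss).
Qed.

Lemma known_full m : (#|S| * #|A| <= known m)%N -> m = (f, r).
Proof.
move=> full; have all_exact : forall p : S * A, exact_at m p.1 p.2.
  have card_eq : known m = #|{: S * A}|.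
    by apply/eqP; rewrite eqn_leq max_card card_prod full.
  by move=> p; have /subset_cardP/(_ (subset_predT _)) := card_eq; move/(_ p).
case: m {full} all_exact => m1 m2 all_exact; congr pair;
  apply: functional_extensionality => s; apply: functional_extensionality => a;
  by case/andP: (all_exact (s, a)) => /eqP ? /eqP.
Qed.

Variables (s1 : S) (T : nat).

Lemma J_exact_along (m : model R S A) (pi : policy S A) :
  (forall k, (k < T)%N -> exact_at m (state_at f pi s1 k) (pi k (state_at f pi s1 k))) ->
  J m.1 m.2 s1 T pi = J f r s1 T pi.
Proof.
move=> ex.
have same_states k : (k <= T)%N -> state_at m.1 pi s1 k = state_at f pi s1 k.
  elim: k => // k IH lt_kT /=; rewrite IH ?(ltnW lt_kT) //.
  by case/andP: (ex k lt_kT) => /eqP.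
apply: eq_bigr => i _; rewrite same_states ?(ltnW (ltn_ord i)) //.
by case/andP: (ex i (ltn_ord i)) => _ /eqP.
Qed.

Hypothesis Rmax_ub : forall s a, r s a <= Rmax.

(* Follow pi until its first unknown pair, then
   repeat that action forever: the model predicts a self-loop paying Rmax. *)
Lemma optimism (m : model R S A) (pi : policy S A) :
  optimistic m -> exists pi', J f r s1 T pi <= J m.1 m.2 s1 T pi'.
Proof.
move=> opt; set st := state_at f pi s1.
case: [exists t0 : 'I_T, ~~ exact_at m (st t0) (pi t0 (st t0))] /existsP
  => [[t unknown_t] | all_known]; last first.
  exists pi; rewrite J_exact_along // => k lt_kT; apply: contraT => unk.
  by case: all_known; exists (Ordinal lt_kT).
have some_unknown : exists k, ~~ exact_at m (st k) (pi k (st k)) by exists t.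
case: (ex_minnP some_unknown) => {t unknown_t some_unknown} t0 unknown0 first0.
set s0 := st t0; set a0 := pi t0 s0.
have [loop0 reward0] : m.1 s0 a0 = s0 /\ m.2 s0 a0 = Rmax.
  by case: (opt s0 a0) => // ex; rewrite ex in unknown0.
have exact_before k : (k < t0)%N -> exact_at m (st k) (pi k (st k)).
  by move=> lt_kt0; apply: contraT => /first0; rewrite leqNgt lt_kt0.
pose pi' t s := if (t < t0)%N then pi t s else a0.
have before k : (k <= t0)%N -> state_at m.1 pi' s1 k = st k.
  elim: k => // k IH lt_kt0 /=; rewrite IH ?(ltnW lt_kt0) // /pi' lt_kt0.
  by case/andP: (exact_before k lt_kt0) => /eqP.
have after d : state_at m.1 pi' s1 (t0 + d) = s0.
  elim: d => [|d IH]; first by rewrite addn0 before.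
  by rewrite addnS /= IH /pi' ltnNge leq_addr /= loop0.
exists pi'; apply: ler_sum => i _; have [lt_it0 | le_t0i] := ltnP i t0.
  rewrite before ?(ltnW lt_it0) // /pi' lt_it0.
  by case/andP: (exact_before i lt_it0) => _ /eqP ->.
by rewrite -(subnKC le_t0i) after /pi' ltnNge leq_addr /= reward0 Rmax_ub.
Qed.

Variable oracle : oracle_type R S A.

Notation episode := (run_episode f r oracle).
Notation episodes := (run_episodes f r s1 T oracle).

Lemma episode_optimistic n t s m : optimistic m -> optimistic (episode n t s m).1.
Proof. by elim: n t s m => //= n IH t s m opt; apply/IH/optimistic_learn. Qed.

Lemma episode_progress n t s m :
  (episode n t s m).1 = m \/ (known m < known (episode n t s m).1)%N.
Proof.
elim: n t s m => [|n IH] t s m /=; first by left.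
set a := oracle m.1 m.2 t s; rewrite -/(learn m s a).
have [ex | unknown] := boolP (exact_at m s a); first by rewrite learn_exact.
right; have gain := known_learn_lt unknown.
by case: (IH t.+1 (f s a) (learn m s a)) => [-> // | /(ltn_trans gain)].
Qed.

Lemma episode_known n t s m : (known m <= known (episode n t s m).1)%N.
Proof. by case: (episode_progress n t s m) => [-> | /ltnW]. Qed.

Lemma stationary_step n t s m (a := oracle m.1 m.2 t s) :
  (episode n.+1 t s m).1 = m ->
  exact_at m s a /\ (episode n t.+1 (f s a) m).1 = m.
Proof.
rewrite /= -/(learn m s a) => stat.
have ex : exact_at m s a.
  apply: contraT => unknown; have := episode_known n t.+1 (f s a) (learn m s a).
  by rewrite stat leqNgt known_learn_lt.
by split=> //; move: stat; rewrite learn_exact.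
Qed.

Lemma stationary_episode_exact n t m (pi := oracle m.1 m.2) :
  (episode n t (state_at f pi s1 t) m).1 = m ->
  forall k, (t <= k < t + n)%N ->
  exact_at m (state_at f pi s1 k) (pi k (state_at f pi s1 k)).
Proof.
elim: n t => [|n IH] t stat k /andP[le_tk lt_k].
  by rewrite addn0 ltnNge le_tk in lt_k.
case/stationary_step: stat => ex stat.
have [lt_tk | lt_kt | <-] := ltngtP t k; [| by rewrite ltnNge le_tk in lt_kt | by []].
by apply: (IH t.+1 stat); rewrite lt_tk addSn -addnS.
Qed.

Lemma episodes_optimistic k m : optimistic m -> optimistic (episodes k m).1.
Proof. by elim: k m => //= k IH m opt; apply/IH/episode_optimistic. Qed.

Lemma episodes_stationary k m : (episode T 0 s1 m).1 = m -> (episodes k m).1 = m.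
Proof. by move=> stat; elim: k => //= k IH; rewrite stat. Qed.

Lemma episodes_progress k m :
  (known m + k <= known (episodes k m).1)%N \/
  (episode T 0 s1 (episodes k m).1).1 = (episodes k m).1.
Proof.
elim: k m => [|k IH] m /=; first by left; rewrite addn0.
case: (episode_progress T 0 s1 m) => [stat | gain].
  by right; rewrite stat episodes_stationary.
case: (IH (episode T 0 s1 m).1) => [more | ]; last by right.
by left; apply: leq_trans more; rewrite addnS -addSn leq_add2r.
Qed.

Lemma stationary_value m :
  (episode T 0 s1 m).1 = m ->
  J m.1 m.2 s1 T (oracle m.1 m.2) = J f r s1 T (oracle m.1 m.2).
Proof.
by move=> stat; apply: J_exact_along => k lt_kT;
  apply: (stationary_episode_exact stat); rewrite add0n.
Qed.

Lemma size_episode n t s m : size (episode n t s m).2 = n.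
Proof. by elim: n t s m => //= n IH t s m; rewrite IH. Qed.

Lemma size_episodes k m : size (episodes k m).2 = (k * T)%N.
Proof. by elim: k m => //= k IH m; rewrite size_cat size_episode IH mulSn. Qed.

End RMax.

Theorem mainTheorem9 (R : realDomainType) (S A : finType) (T : nat) (s1 : S)
  (f : S -> A -> S) (r : S -> A -> R) (Rmax : R)
  (hRmax_ub : forall s a, r s a <= Rmax)
  (hRmax_att : exists s a, r s a = Rmax)
  (oracle : (S -> A -> S) -> (S -> A -> R) -> nat -> S -> A)
  (horacle : forall (fh : S -> A -> S) (rh : S -> A -> R),
      optimal fh rh s1 T (oracle fh rh)) :
  optimal f r s1 T (rmax_policy f r s1 T Rmax oracle) /\
  size (rmax_samples f r s1 T Rmax oracle) = (#|S| * #|A| * T)%N.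
Proof.
split; last exact: size_episodes.
rewrite /rmax_policy /rmax_run; set m := (run_episodes _ _ _ _ _ _ _).1.
have opt : optimistic f r Rmax m by apply: episodes_optimistic => s a; right.
have [learned_all | stat] :
    (#|S| * #|A| <= known f r m)%N \/ (run_episode f r oracle T 0 s1 m).1 = m.
  case: (episodes_progress f r s1 T oracle (#|S| * #|A|) (init_model S A Rmax))
    => [learned | stat]; last by right.
  by left; apply: leq_trans learned; apply: leq_addl.
by rewrite (known_full learned_all); apply: horacle.
move=> pi; have [pi' le_model] := optimism s1 T hRmax_ub pi opt.
by rewrite -(stationary_value stat); apply: le_trans le_model _; apply: horacle.
Qed.
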